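(* Let $s\in\tfrac12\mathbb{Z}_{>0}$, $\lambda\in\mathbb{C}$, $q=e^{\lambda}$, and define $a_j(u)=\sinh[u+(2s+1-j)\lambda]$ and $b_j(\lambda)=\sqrt{\sinh(j\lambda)\sinh[\lambda(2s+1-j)]}$. With $[n]=\frac{q^n-q^{-n}}{q-q^{-1}}=\frac{\sinh(n\lambda)}{\sinh\lambda}$, $[n]!=[n][n-1]\cdots[1]$, $[0]!=1$ and $\left[\begin{array}{c}m\\k\end{array}\right]=\frac{[m]!}{[m-k]!\,[k]!}$, define $$f^{(p)}(\sigma;u)=\sum_{k=0}^p(-e^{2\lambda\sigma})^k\left[\begin{array}{c}p\\k\end{array}\right]\prod_{j=1}^k\sinh[u+(j-1)\lambda]\prod_{j=k+1}^p\sinh[u+(2s+j-p)\lambda].$$ For any $\sigma\in\mathbb{C}$ these functions satisfy $$f^{(p)}(\sigma;u)+e^{2\lambda\sigma}a_{2s+2-p}(u)f^{(p-1)}(\sigma;u)=a_1(u)f^{(p-1)}(\sigma;u-\lambda),$$ $$a_{p+1}(u)f^{(p)}(\sigma;u)+e^{2\lambda\sigma}b_p(\lambda)^2f^{(p-1)}(\sigma;u)=f^{(p)}(\sigma;u-\lambda)a_1(u),$$ and $$a_1(u)a_{2s+1}(u)f^{(j-1)}(\sigma;u-\lambda)f^{(j-1)}(\sigma;u+\lambda)=a_j(u)a_{2s+2-j}(u)f^{(j-1)}(\sigma;u)^2-b_{j-1}(\lambda)^2f^{(j)}(\sigma;u)f^{(j-2)}(\sigma;u).$$ If moreover $\sigma\in\{-s,-s+1,\ldots,s\}$,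 then $$f^{(2s)}(\sigma;u-\lambda)=e^{2\lambda\sigma}f^{(2s)}(\sigma;u).$$
   Context: The functions $a_j(u),b_j(\lambda)$ are the non-zero matrix entries of the spin-$(\tfrac12,s)$ XXZ $R$-matrix $R^{(1,2s)}(u)$. The $q$-binomial theorem $\sum_{k=0}^{2s+1}a^k\left[\begin{array}{c}2s+1\\k\end{array}\right]=\prod_{j=-s}^s(1+aq^{2j})$ is used in the proof of the last identity. *)

From HB Require Import structures.
From mathcomp Require Import all_boot all_order all_algebra.
From mathcomp Require Import reals sequences exp trigo.
From mathcomp Require Import complex.
Set Implicit Arguments. Unset Strict Implicit. Unset Printing Implicit Defensive.
Import Order.TTheory GRing.Theory Num.Theory.
Local Open Scope ring_scope.
Local Open Scope complex_scope.

Definition cexp (R : realType) (z : R[i]) : R[i] :=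
  (expR (@complex.Re R z) * cos (@complex.Im R z)) +i* (expR (@complex.Re R z) * sin (@complex.Im R z)).

Definition csinh (R : realType) (z : R[i]) : R[i] := (cexp z - cexp (- z)) / 2.

Definition qnum (R : realType) (lam : R[i]) (m : nat) : R[i] :=
  csinh (m%:R * lam) / csinh lam.

Definition qfact (R : realType) (lam : R[i]) (m : nat) : R[i] :=
  \prod_(1 <= i < m.+1) qnum lam i.

Definition qbinom (R : realType) (lam : R[i]) (m k : nat) : R[i] :=
  qfact lam m / (qfact lam (m - k) * qfact lam k).

(* Throughout, n = 2s (a positive integer), so 2s+1-j = n+1-j. *)

Definition a_ent (R : realType) (n : nat) (lam : R[i]) (j : int) (u : R[i]) : R[i] :=
  csinh (u + (n%:R + 1 - j%:~R) * lam).

Definition b_ent (R : realType) (n : nat) (lam : R[i]) (j : int) : R[i] :=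
  sqrtC (csinh (j%:~R * lam) * csinh (lam * (n%:R + 1 - j%:~R))).

Definition fp (R : realType) (n : nat) (lam sigma : R[i]) (p : nat) (u : R[i]) : R[i] :=
  \sum_(0 <= k < p.+1)
     (- cexp (2 * lam * sigma)) ^+ k * qbinom lam p k
     * (\prod_(1 <= j < k.+1) csinh (u + (j%:R - 1) * lam))
     * (\prod_(k.+1 <= j < p.+1) csinh (u + (n%:R + j%:R - p%:R) * lam)).

(* Write f^(p)(sigma; u) as the value at x = -e^(2 lam sigma) of the polynomial
   sum_k [p k] x^k prod_(i < k) sinh(u + i lam) prod_(i < p - k) sinh(u + (2s - i) lam).
   The first two identities, and the companion
     f^(p+1)(u) + e^(2 lam sigma) sinh(u) f^(p)(u + lam) = sinh(u + (2s - p) lam) f^(p)(u),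
   are identities between such polynomials.  Comparing coefficients and using
   [p+1 k+1] = [p k] [p+1]/[k+1] and [p k+1] = [p k] [p-k]/[k+1], each reduces to the
   addition theorem  sinh a sinh b - sinh c sinh d = sinh(c - b) sinh(c - a)  for
   a + b = c + d.  The quadratic identity follows from these three linear relations:
   after multiplying by e^(2 lam sigma), they express the terms containing
   f^(j-1)(u + lam), f^(j-2)(u) and f^(j)(u) through f^(j-1)(u) and f^(j-1)(u - lam).  Finally
   f^(2s)(u - lam) - e^(2 lam sigma) f^(2s)(u) is prod_(i < 2s) sinh(u + i lam) times
   sum_k [2s+1 k] a^k at a = -q^(2 sigma), and by the q-binomial theorem this sum is
   prod_(j = -s .. s) (1 + a q^(2j)), which vanishes when sigma is in {-s, ..., s}. *)

From mathcomp Require Import all_boot all_order all_algebra.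
From mathcomp Require Import reals exp trigo.
From mathcomp Require Import complex.
From mathcomp Require Import ring zify.
Set Implicit Arguments. Unset Strict Implicit. Unset Printing Implicit Defensive.
Import GRing.Theory Num.Theory.
Local Open Scope ring_scope.
Local Open Scope complex_scope.

Section ComplexSinh.
Variable R : realType.
Implicit Types a b c d e f x y z : R[i].

Lemma cexpD x y : cexp (x + y) = cexp x * cexp y.
Proof.
case: x => a b; case: y => c d; rewrite /cexp /= expRD cosD sinD.
by apply/eqP; rewrite eq_complex /=; apply/andP; split; apply/eqP; ring.
Qed.

Lemma cexp0 : cexp (0 : R[i]) = 1.
Proof. by rewrite /cexp /= expR0 cos0 sin0 !mulr1 mulr0. Qed.

Lemma cexpNK x : cexp (- x) * cexp x = 1.
Proof. by rewrite -cexpD addNr cexp0. Qed.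

Lemma cexp_neq0 x : cexp x != 0.
Proof.
by apply/eqP => hx; have := cexpNK x; rewrite hx mulr0 => /esym/eqP; rewrite oner_eq0.
Qed.

Lemma cexpN x : cexp (- x) = (cexp x)^-1.
Proof. by apply: (mulIf (cexp_neq0 x)); rewrite cexpNK mulVf ?cexp_neq0. Qed.

Lemma cexpMn m z : cexp (m%:R * z) = cexp z ^+ m.
Proof.
elim: m => [|m IH]; first by rewrite mul0r cexp0.
by rewrite -addn1 natrD mulrDl mul1r cexpD IH exprD expr1.
Qed.

Lemma csinh_three_term a b c d e f : a + b = c + d -> e = c - b -> f = c - a ->
  csinh a * csinh b - csinh c * csinh d = csinh e * csinh f.
Proof.
move=> hd -> ->; rewrite (_ : d = a + b - c); last by rewrite hd addrC addKr.
rewrite /csinh !opprB !(cexpD, cexpN).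
have := cexp_neq0 a; have := cexp_neq0 b; have := cexp_neq0 c.
move: (cexp a) (cexp b) (cexp c) => A B C *.
by field; apply/and3P.
Qed.

End ComplexSinh.

Section QNumbers.
Variables (R : realType) (lam : R[i]).
Hypothesis csinh_mul_lam_neq0 : forall m : nat, (0 < m)%N -> csinh (m%:R * lam) != 0.

Lemma csinh_lamS_neq0 m : csinh (m.+1%:R * lam) != 0.
Proof. exact: csinh_mul_lam_neq0. Qed.

Lemma csinh_lam_neq0 : csinh lam != 0.
Proof. by have := csinh_lamS_neq0 0; rewrite mul1r. Qed.

Lemma qnum_neq0 m : qnum lam m.+1 != 0.
Proof. by rewrite mulf_neq0 ?csinh_lamS_neq0 // invr_eq0 csinh_lam_neq0. Qed.

Lemma qfact0 : qfact lam 0 = 1.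
Proof. by rewrite /qfact big_geq. Qed.

Lemma qfactS m : qfact lam m.+1 = qfact lam m * qnum lam m.+1.
Proof. by rewrite /qfact big_nat_recr. Qed.

Lemma qfact_neq0 m : qfact lam m != 0.
Proof.
elim: m => [|m IH]; first by rewrite qfact0 oner_eq0.
by rewrite qfactS mulf_neq0 ?qnum_neq0.
Qed.

Lemma qbinomn0 m : qbinom lam m 0 = 1.
Proof. by rewrite /qbinom subn0 qfact0 mulr1 divff ?qfact_neq0. Qed.

Lemma qbinomnn m : qbinom lam m m = 1.
Proof. by rewrite /qbinom subnn qfact0 mul1r divff ?qfact_neq0. Qed.

Lemma qbinomSS m k :
  qbinom lam m.+1 k.+1 = qbinom lam m k * qnum lam m.+1 / qnum lam k.+1.
Proof.
rewrite /qbinom subSS !qfactS.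
have := qfact_neq0 m; have := qfact_neq0 k; have := qfact_neq0 (m - k).
have := qnum_neq0 m; have := qnum_neq0 k.
move: (qfact lam m) (qfact lam k) (qfact lam (m - k)) (qnum lam m.+1) (qnum lam k.+1) => *.
by field; do ?[apply/andP; split].
Qed.

Lemma qbinomS m k : (k < m)%N ->
  qbinom lam m k.+1 = qbinom lam m k * qnum lam (m - k) / qnum lam k.+1.
Proof.
move=> /subnKC <-; set d := (m - k.+1)%N.
rewrite /qbinom addKn (_ : (k.+1 + d - k = d.+1)%N); last by lia.
rewrite !qfactS.
have := qfact_neq0 (k.+1 + d); have := qfact_neq0 k; have := qfact_neq0 d.
have := qnum_neq0 d; have := qnum_neq0 k.
move: (qfact lam (k.+1 + d)) (qfact lam k) (qfact lam d) (qnum lam d.+1) (qnum lam k.+1) => *.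
by field; do ?[apply/andP; split].
Qed.

Let q := cexp lam.

Let q_neq0 : q != 0. Proof. exact: cexp_neq0. Qed.

Let qq_sub1_neq0 : q * q - 1 != 0.
Proof.
have := csinh_lam_neq0; rewrite /csinh cexpN -/q.
rewrite (_ : q - q^-1 = (q * q - 1) / q); last by field.
by apply: contraNneq => ->; rewrite !mul0r.
Qed.

Lemma qnumE m : qnum lam m = (q ^+ m - q ^- m) / (q - q^-1).
Proof.
rewrite /qnum /csinh cexpN cexpMn cexpN -/q.
by field; rewrite q_neq0 qq_sub1_neq0 expf_neq0.
Qed.

Lemma qnumD m l : qnum lam (m + l) = q ^- l * qnum lam m + q ^+ m * qnum lam l.
Proof.
rewrite !qnumE exprD.
by field; rewrite q_neq0 qq_sub1_neq0 !expf_neq0.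
Qed.

Lemma qbinom_pascal m k : (k < m)%N ->
  qbinom lam m.+1 k.+1 = q ^- k.+1 * qbinom lam m k.+1 + q ^+ (m - k) * qbinom lam m k.
Proof.
move=> lt_km; rewrite qbinomSS // qbinomS //.
have [d ->] : exists d, m = (d.+1 + k)%N by exists (m - k.+1)%N; lia.
rewrite addnK -addnS qnumD.
have := qnum_neq0 k.
move: (qnum lam k.+1) (qnum lam d.+1) (qbinom lam (d.+1 + k) k) => Nk Nd B Nk_neq0.
by field; rewrite Nk_neq0 expf_neq0.
Qed.

Definition qbinom_poly m : {poly R[i]} := \poly_(k < m.+1) qbinom lam m k.

Lemma qbinom_polyS m :
  qbinom_poly m.+1 = (1 + q ^+ m *: 'X) * \poly_(k < m.+1) (q ^- k * qbinom lam m k).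
Proof.
apply/polyP => k; rewrite mulrDl mul1r -scalerAl coefD coefZ coefXM !coef_poly.
case: k => [|k] /=; first by rewrite !qbinomn0 expr0 invr1 mulr0 mulr1 addr0.
have [lt_km|lt_mk|->] := ltngtP k m.
- rewrite !ifT; try lia.
  by rewrite qbinom_pascal // expfB //; ring.
- by rewrite !ifF ?mulr0 ?addr0 //; lia.
- by rewrite ltnn !ltnSn !qbinomnn add0r mulr1 divff ?expf_neq0.
Qed.

Lemma horner_qbinom_polyS m a :
  (qbinom_poly m.+1).[a] = (1 + a * q ^+ m) * (qbinom_poly m).[a / q].
Proof.
rewrite qbinom_polyS hornerM hornerD hornerC hornerZ hornerX !horner_poly.
congr (_ * _); first by rewrite mulrC.
by apply: eq_bigr => k _; rewrite exprMn exprVn; ring.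
Qed.

(* The paper's [prod_(j = -s .. s) (1 + a q^(2j))] for [m = 2s + 1], with [i = s - j]. *)
Lemma qbinom_theorem m a :
  (qbinom_poly m).[a] = \prod_(i < m) (1 + a * q ^+ (m.-1 - i) / q ^+ i).
Proof.
elim: m a => [|m IH] a.
  by rewrite big_ord0 /qbinom_poly poly_def big_ord1 qbinomnn expr0 alg_polyC hornerC.
rewrite horner_qbinom_polyS IH big_ord_recl /= subn0 expr0 divr1.
congr (_ * _); apply: eq_bigr => i _.
rewrite /bump /= add1n subnS predn_sub exprS.
by field; rewrite q_neq0 expf_neq0.
Qed.

Lemma qbinom_poly_root m j : (j <= m)%N ->
  (qbinom_poly m.+1).[- (q ^+ j.*2 / q ^+ m)] = 0.
Proof.
rewrite -ltnS => lt_jm; rewrite qbinom_theorem (bigD1 (Ordinal lt_jm)) //=.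
rewrite [X in X * _](_ : _ = 0) ?mul0r //.
rewrite -addnn exprD -[in q ^+ m](subnK (ltnSE lt_jm)) exprD.
by field; rewrite !expf_neq0.
Qed.

Section Fpoly.
Variable n : nat.
Implicit Types u : R[i].

Definition sinh_rise u k := \prod_(i < k) csinh (u + i%:R * lam).
Definition sinh_fall u d := \prod_(i < d) csinh (u + (n%:R - i%:R) * lam).

Lemma sinh_rise0 u : sinh_rise u 0 = 1.
Proof. exact: big_ord0. Qed.

Lemma sinh_riseSr u k : sinh_rise u k.+1 = sinh_rise u k * csinh (u + k%:R * lam).
Proof. exact: big_ord_recr. Qed.

Lemma sinh_riseSl u k : sinh_rise u k.+1 = csinh u * sinh_rise (u + lam) k.
Proof.
rewrite /sinh_rise big_ord_recl mul0r addr0; congr (_ * _).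
by apply: eq_bigr => i _; rewrite lift0; congr csinh; ring.
Qed.

Lemma sinh_fall0 u : sinh_fall u 0 = 1.
Proof. exact: big_ord0. Qed.

Lemma sinh_fallSr u d : sinh_fall u d.+1 = sinh_fall u d * csinh (u + (n%:R - d%:R) * lam).
Proof. exact: big_ord_recr. Qed.

Lemma sinh_fallSl u d : sinh_fall u d.+1 = csinh (u + n%:R * lam) * sinh_fall (u - lam) d.
Proof.
rewrite /sinh_fall big_ord_recl subr0; congr (_ * _).
by apply: eq_bigr => i _; rewrite lift0; congr csinh; ring.
Qed.

Lemma sinh_rise_fall u k d : (k + d)%N = n ->
  sinh_rise u n = sinh_rise u k * sinh_fall (u - lam) d.
Proof.
elim: d k => [|d IH] k hkd; first by rewrite -hkd addn0 sinh_fall0 mulr1.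
rewrite (IH k.+1) ?addSnnS // sinh_riseSr sinh_fallSr -mulrA.
rewrite [sinh_fall _ d * _]mulrC; congr (_ * (csinh _ * _)).
by rewrite -hkd; ring.
Qed.

Definition fcoef p k u := qbinom lam p k * sinh_rise u k * sinh_fall u (p - k).
Definition fpoly p u : {poly R[i]} := \poly_(k < p.+1) fcoef p k u.

Lemma fp_horner sigma p u : fp n lam sigma p u = (fpoly p u).[- cexp (2 * lam * sigma)].
Proof.
rewrite /fp horner_poly big_mkord; apply: eq_bigr => k _.
rewrite [RHS]mulrC /fcoef !mulrA; congr (_ * _ * _).
  rewrite big_add1 /= big_mkord; apply: eq_bigr => i _.
  by congr csinh; ring.
rewrite big_rev_mkord subSS; apply: eq_bigr => i _.
rewrite subSS natrB; last by have := ltn_ord i; lia.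
by congr csinh; ring.
Qed.

Lemma csinh_fall_sub_lam u d :
  csinh (u + n%:R * lam) * sinh_fall (u - lam) d
  = sinh_fall u d * csinh (u + (n%:R - d%:R) * lam).
Proof. by rewrite -sinh_fallSl sinh_fallSr. Qed.

Lemma fcoefSS_sub_lam p k u : (k < p)%N ->
  fcoef p.+1 k.+1 u - csinh (u + p%:R * lam) * fcoef p k u
  = csinh (u + n%:R * lam) * fcoef p k.+1 (u - lam).
Proof.
move=> lt_kp; have [d ->] : exists d, p = (k + d.+1)%N by exists (p - k.+1)%N; lia.
rewrite /fcoef qbinomSS qbinomS; last by lia.
rewrite subSS !addKn (_ : (k + d.+1 - k.+1 = d)%N); last by lia.
rewrite sinh_riseSr sinh_riseSl addrNK sinh_fallSl /qnum.
have three_term : csinh ((k + d.+1).+1%:R * lam) * csinh (u + k%:R * lam)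
    - csinh (u + (k + d.+1)%:R * lam) * csinh (k.+1%:R * lam)
  = csinh (d.+1%:R * lam) * csinh (u - lam) by apply: csinh_three_term; ring.
(* Solve the addition theorem for the factor whose cofactor, a sinh of a multiple of lam,
   is known to be nonzero; the rest is field arithmetic. *)
rewrite -[csinh (u - lam)](mulKf (csinh_lamS_neq0 d)) -three_term.
by field; rewrite csinh_lam_neq0 ?(csinh_lamS_neq0 k) ?(csinh_lamS_neq0 d).
Qed.

Lemma fcoefSS_shift p k u : (k <= p)%N ->
  csinh (u + (n%:R - p.+1%:R) * lam) * fcoef p.+1 k.+1 u
    - csinh (p.+1%:R * lam) * csinh ((n%:R - p%:R) * lam) * fcoef p k u
  = csinh (u + n%:R * lam) * fcoef p.+1 k.+1 (u - lam).
Proof.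
move=> le_kp; have [d ->] : exists d, p = (k + d)%N by exists (p - k)%N; lia.
rewrite /fcoef qbinomSS subSS !addKn.
rewrite sinh_riseSr sinh_riseSl addrNK [RHS]mulrCA [X in _ = _ * X]csinh_fall_sub_lam /qnum.
have three_term : csinh (u + k%:R * lam) * csinh (u + (n%:R - (k + d).+1%:R) * lam)
    - csinh (u + (n%:R - d%:R) * lam) * csinh (u - lam)
  = csinh (k.+1%:R * lam) * csinh ((n%:R - (k + d)%:R) * lam)
  by apply: csinh_three_term; ring.
rewrite -[csinh ((n%:R - _) * lam)](mulKf (csinh_lamS_neq0 k)) -three_term.
by field; rewrite csinh_lam_neq0 ?(csinh_lamS_neq0 k) ?(csinh_lamS_neq0 d).
Qed.

Lemma fcoefSS_add_lam p k u : (k < p)%N ->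
  fcoef p.+1 k.+1 u - csinh u * fcoef p k (u + lam)
  = csinh (u + (n%:R - p%:R) * lam) * fcoef p k.+1 u.
Proof.
move=> lt_kp; have [d ->] : exists d, p = (k + d.+1)%N by exists (p - k.+1)%N; lia.
rewrite /fcoef qbinomSS qbinomS; last by lia.
rewrite subSS !addKn (_ : (k + d.+1 - k.+1 = d)%N); last by lia.
rewrite !sinh_riseSl sinh_fallSr sinh_fallSl addrK /qnum.
have three_term : csinh ((k + d.+1).+1%:R * lam) * csinh (u + (n%:R - d%:R) * lam)
    - csinh (u + lam + n%:R * lam) * csinh (k.+1%:R * lam)
  = csinh (d.+1%:R * lam) * csinh (u + (n%:R - (k + d.+1)%:R) * lam)
  by apply: csinh_three_term; ring.
rewrite -[csinh (u + (n%:R - (k + d.+1)%:R) * lam)](mulKf (csinh_lamS_neq0 d)).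
rewrite -three_term.
by field; rewrite csinh_lam_neq0 ?(csinh_lamS_neq0 k) ?(csinh_lamS_neq0 d).
Qed.

Lemma fcoef_top k u : (k < n)%N ->
  fcoef n k.+1 (u - lam) + fcoef n k u = sinh_rise u n * qbinom lam n.+1 k.+1.
Proof.
move=> lt_kn; have [d hn] : exists d, n = (k + d.+1)%N by exists (n - k.+1)%N; lia.
rewrite /fcoef qbinomSS qbinomS // (_ : (n - k.+1 = d)%N); last by lia.
rewrite (_ : (n - k = d.+1)%N); last by lia.
rewrite sinh_riseSl addrNK sinh_fallSl (sinh_rise_fall u (esym hn)) sinh_fallSr /qnum.
have three_term : csinh (n.+1%:R * lam) * csinh (u + k%:R * lam)
    - csinh (u + n%:R * lam) * csinh (k.+1%:R * lam)
  = csinh (d.+1%:R * lam) * csinh (u - lam)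
  by apply: csinh_three_term; rewrite hn; ring.
rewrite (_ : u - lam + (n%:R - d%:R) * lam = u + k%:R * lam); last by rewrite hn; ring.
rewrite -[csinh (u - lam)](mulKf (csinh_lamS_neq0 d)) -three_term.
by field; rewrite csinh_lam_neq0 ?(csinh_lamS_neq0 k) ?(csinh_lamS_neq0 d).
Qed.

Lemma fpolyS_sub_lam p u :
  fpoly p.+1 u - csinh (u + p%:R * lam) *: ('X * fpoly p u)
  = csinh (u + n%:R * lam) *: fpoly p (u - lam).
Proof.
apply/polyP => k; rewrite /fpoly coefB !coefZ coefXM !coef_poly.
case: k => [|k] /=.
  by rewrite mulr0 subr0 /fcoef !qbinomn0 !sinh_rise0 !subn0 sinh_fallSl; ring.
have [lt_kp|lt_pk|->] := ltngtP k p.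
- by rewrite !ifT ?fcoefSS_sub_lam //; lia.
- by rewrite !ifF ?mulr0 ?subr0 //; lia.
- by rewrite ltnn !ltnSn mulr0 /fcoef !qbinomnn !subnn !sinh_fall0 sinh_riseSr; ring.
Qed.

Lemma fpolyS_shift p u :
  csinh (u + (n%:R - p.+1%:R) * lam) *: fpoly p.+1 u
    - (csinh (p.+1%:R * lam) * csinh ((n%:R - p%:R) * lam)) *: ('X * fpoly p u)
  = csinh (u + n%:R * lam) *: fpoly p.+1 (u - lam).
Proof.
apply/polyP => k; rewrite /fpoly coefB !coefZ coefXM !coef_poly.
case: k => [|k] /=.
  rewrite mulr0 subr0 /fcoef !qbinomn0 !sinh_rise0 !subn0 !mul1r.
  by rewrite [RHS]csinh_fall_sub_lam mulrC.
have [le_kp|lt_pk] := leqP k p.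
- by rewrite !ifT ?fcoefSS_shift //; lia.
- by rewrite !ifF ?mulr0 ?subr0 //; lia.
Qed.

Lemma fpolyS_add_lam p u :
  fpoly p.+1 u - csinh u *: ('X * fpoly p (u + lam))
  = csinh (u + (n%:R - p%:R) * lam) *: fpoly p u.
Proof.
apply/polyP => k; rewrite /fpoly coefB !coefZ coefXM !coef_poly.
case: k => [|k] /=.
  by rewrite mulr0 subr0 /fcoef !qbinomn0 !sinh_rise0 !subn0 sinh_fallSr; ring.
have [lt_kp|lt_pk|->] := ltngtP k p.
- by rewrite !ifT ?fcoefSS_add_lam //; lia.
- by rewrite !ifF ?mulr0 ?subr0 //; lia.
- by rewrite ltnn !ltnSn mulr0 /fcoef !qbinomnn !subnn !sinh_fall0 sinh_riseSl; ring.
Qed.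

Lemma fpoly_top u :
  fpoly n (u - lam) + 'X * fpoly n u = sinh_rise u n *: qbinom_poly n.+1.
Proof.
apply/polyP => k; rewrite /fpoly /qbinom_poly coefD coefZ coefXM !coef_poly.
case: k => [|k] /=.
  rewrite addr0 /fcoef !qbinomn0 sinh_rise0 subn0 (sinh_rise_fall u (add0n n)).
  by rewrite sinh_rise0; ring.
have [lt_kn|lt_nk|->] := ltngtP k n.
- by rewrite !ifT ?fcoef_top //; lia.
- by rewrite !ifF ?mulr0 ?addr0 //; lia.
- by rewrite ltnn !ltnSn add0r /fcoef !qbinomnn subnn sinh_fall0; ring.
Qed.

Section Evaluation.
Variable sigma : R[i].
Let E := cexp (2 * lam * sigma).
Local Notation f := (fp n lam sigma).

Lemma fp_sub_lam p u :
  f p.+1 u + E * csinh (u + p%:R * lam) * f p u = csinh (u + n%:R * lam) * f p (u - lam).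
Proof.
rewrite !fp_horner -/E; have := congr1 (horner^~ (- E)) (fpolyS_sub_lam p u).
rewrite hornerD hornerN !hornerZ hornerM hornerX => <-; ring.
Qed.

Lemma fp_shift p u :
  csinh (u + (n%:R - p.+1%:R) * lam) * f p.+1 u
    + E * (csinh (p.+1%:R * lam) * csinh ((n%:R - p%:R) * lam)) * f p u
  = csinh (u + n%:R * lam) * f p.+1 (u - lam).
Proof.
rewrite !fp_horner -/E; have := congr1 (horner^~ (- E)) (fpolyS_shift p u).
rewrite ?hornerD ?hornerN !hornerZ hornerM hornerX => <-; ring.
Qed.

Lemma fp_add_lam p u :
  f p.+1 u + E * csinh u * f p (u + lam) = csinh (u + (n%:R - p%:R) * lam) * f p u.
Proof.
rewrite !fp_horner -/E; have := congr1 (horner^~ (- E)) (fpolyS_add_lam p u).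
rewrite ?hornerD ?hornerN !hornerZ hornerM hornerX => <-; ring.
Qed.

Lemma fp_top_sub_lam u :
  f n (u - lam) - E * f n u = sinh_rise u n * (qbinom_poly n.+1).[- E].
Proof.
rewrite !fp_horner -/E; have := congr1 (horner^~ (- E)) (fpoly_top u).
rewrite ?hornerD ?hornerN !hornerZ hornerM hornerX => <-; ring.
Qed.

Lemma fp_quadratic i u :
  csinh (u + n%:R * lam) * csinh u * f i.+1 (u - lam) * f i.+1 (u + lam)
  = csinh (u + (n%:R - i.+1%:R) * lam) * csinh (u + i.+1%:R * lam) * f i.+1 u ^+ 2
    - csinh (i.+1%:R * lam) * csinh ((n%:R - i%:R) * lam) * f i.+2 u * f i u.
Proof.
have := fp_sub_lam i.+1 u; have := fp_shift i u; have := fp_add_lam i.+1 u.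
set Fm := f i.+1 (u - lam); set Fp := f i.+1 (u + lam); set F := f i.+1 u.
set Fj := f i.+2 u; set G := f i u; set a := csinh (u + (n%:R - i.+1%:R) * lam).
have E_neq0 : E != 0 by exact: cexp_neq0.
move=> h3 h2 h1; apply: (mulfI E_neq0).
rewrite (_ : E * (_ * _ * _ * _) = csinh (u + n%:R * lam) * Fm * (E * csinh u * Fp));
  last by ring.
rewrite (_ : E * (_ - _) = E * a * csinh (u + i.+1%:R * lam) * F ^+ 2
   - E * (csinh (i.+1%:R * lam) * csinh ((n%:R - i%:R) * lam)) * G * Fj); last by ring.
rewrite (_ : E * csinh u * Fp = a * F - Fj); last by rewrite -h3; ring.
rewrite (_ : E * _ * G = csinh (u + n%:R * lam) * Fm - a * F); last by rewrite -h2; ring.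
by rewrite -h1; ring.
Qed.

Lemma fp_quasi_periodic k : (k <= n)%N -> sigma = k%:R - n%:R / 2 ->
  forall u, f n (u - lam) = E * f n u.
Proof.
move=> le_kn sigmaE u; apply/eqP; rewrite -subr_eq0 fp_top_sub_lam.
suff -> : E = q ^+ k.*2 / q ^+ n by rewrite qbinom_poly_root // mulr0.
rewrite /E sigmaE (_ : 2 * lam * _ = k.*2%:R * lam - n%:R * lam).
  by rewrite cexpD cexpN !cexpMn.
by rewrite -muln2 natrM; field.
Qed.

End Evaluation.

End Fpoly.
End QNumbers.

Theorem lemma1 (R : realType) (n : nat) (hn : (0 < n)%N) (lam sigma : R[i])
    (hlam : forall m : nat, (0 < m)%N -> csinh (m%:R * lam) != 0) :
  (forall (p : nat) (u : R[i]), (1 <= p)%N ->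
     fp n lam sigma p u
       + cexp (2 * lam * sigma) * a_ent n lam (n%:Z + 2 - p%:Z) u
         * fp n lam sigma p.-1 u
     = a_ent n lam 1 u * fp n lam sigma p.-1 (u - lam))
  /\
  (forall (p : nat) (u : R[i]), (1 <= p)%N ->
     a_ent n lam (p%:Z + 1) u * fp n lam sigma p u
       + cexp (2 * lam * sigma) * b_ent n lam p%:Z ^+ 2 * fp n lam sigma p.-1 u
     = fp n lam sigma p (u - lam) * a_ent n lam 1 u)
  /\
  (forall (j : nat) (u : R[i]), (2 <= j)%N ->
     a_ent n lam 1 u * a_ent n lam (n%:Z + 1) u
       * fp n lam sigma (j - 1) (u - lam) * fp n lam sigma (j - 1) (u + lam)
     = a_ent n lam j%:Z u * a_ent n lam (n%:Z + 2 - j%:Z) u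
         * fp n lam sigma (j - 1) u ^+ 2
       - b_ent n lam (j%:Z - 1) ^+ 2 * fp n lam sigma j u * fp n lam sigma (j - 2) u)
  /\
  (forall k : nat, (k <= n)%N -> sigma = k%:R - n%:R / 2 ->
     forall u : R[i],
       fp n lam sigma n (u - lam) = cexp (2 * lam * sigma) * fp n lam sigma n u).
Proof.
have a1 u : a_ent n lam 1 u = csinh (u + n%:R * lam) by rewrite /a_ent; congr csinh; ring.
have b_sqr (p : nat) : b_ent n lam p.+1 ^+ 2
    = csinh (p.+1%:R * lam) * csinh ((n%:R - p%:R) * lam).
  by rewrite /b_ent sqrtCK; congr (csinh _ * csinh _); ring.
split; [|split; [|split]].
- case=> // p u _; rewrite a1 -(fp_sub_lam hlam n sigma p u) /a_ent.
  by congr (_ + _ * csinh _ * _); ring.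
- case=> // p u _; rewrite a1 b_sqr [RHS]mulrC -(fp_shift hlam n sigma p u) /a_ent.
  by congr (csinh _ * _ + _); ring.
- case=> [|[|i]] // u _; rewrite a1 !subSS !subn0 (_ : i.+2%:Z - 1 = i.+1); last by lia.
  rewrite b_sqr (_ : a_ent n lam (n%:Z + 1) u = csinh u); last first.
    by rewrite /a_ent; congr csinh; ring.
  rewrite (_ : a_ent n lam i.+2%:Z u * a_ent n lam (n%:Z + 2 - i.+2%:Z) u
     = csinh (u + (n%:R - i.+1%:R) * lam) * csinh (u + i.+1%:R * lam)).
    exact: fp_quadratic.
  by rewrite /a_ent; congr (_ * _); congr csinh; ring.
- exact: fp_quasi_periodic.
Qed.
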